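(* Consider the system \[ \begin{aligned} \dot S_h(t)&=\beta_h-C_{vh}\frac{I_v(t)}{N_v(t)}S_h(t)-\mu_hS_h(t),\\ \dot I_h(t)&=C_{vh}\frac{I_v(t-\tau)}{N_v(t-\tau)}S_h(t-\tau)-\mu_hI_h(t),\\ \dot S_v(t)&=\beta_v-C_{hv}I_h(t)S_v(t)-\mu_vS_v(t),\\ \dot I_v(t)&=C_{hv}I_h(t)S_v(t)-\mu_vI_v(t), \end{aligned} \] with $N_v=S_v+I_v$, positive parameters $\beta_h,\beta_v,\mu_h,\mu_v,C_{vh},C_{hv}$ and $\tau\ge0$. Let $R_0=\sqrt{\dfrac{C_{vh}C_{hv}\beta_h}{\mu_h^2\mu_v}}$. Then the system has a unique endemic equilibrium, i.e. an equilibrium $E^*=(S_h^*,I_h^*,S_v^*,I_v^* )^T$ with all four components positive, if and only if $R_0>1$. *)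

From mathcomp Require Import all_boot all_order all_algebra.
Set Implicit Arguments. Unset Strict Implicit. Unset Printing Implicit Defensive.
Import Order.TTheory GRing.Theory Num.Theory.
Local Open Scope ring_scope.

Definition state (R : Type) := (R * R * R * R)%type.

Definition Sh {R : Type} (x : state R) := x.1.1.1.
Definition Ih {R : Type} (x : state R) := x.1.1.2.
Definition Sv {R : Type} (x : state R) := x.1.2.
Definition Iv {R : Type} (x : state R) := x.2.
Definition Nv {R : nmodType} (x : state R) := Sv x + Iv x.

(* Right-hand side of the delay system: [x] is the state at time t,
   [xd] the state at time t - tau. *)
Definition vfield (R : fieldType) (betah betav muh muv Cvh Chv : R)
  (x xd : state R) : state R :=
  ( betah - Cvh * (Iv x / Nv x) * Sh x - muh * Sh x,
    Cvh * (Iv xd / Nv xd) * Sh xd - muh * Ih x,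
    betav - Chv * Ih x * Sv x - muv * Sv x,
    Chv * Ih x * Sv x - muv * Iv x ).

(* An equilibrium is a constant solution: the vector field vanishes when
   both the current and the delayed state equal E. *)
Definition is_equilibrium (R : fieldType) (betah betav muh muv Cvh Chv : R)
  (E : state R) : Prop :=
  vfield betah betav muh muv Cvh Chv E E = (0, 0, 0, 0).

Definition is_endemic_equilibrium (R : numFieldType)
  (betah betav muh muv Cvh Chv : R) (E : state R) : Prop :=
  is_equilibrium betah betav muh muv Cvh Chv E /\
  0 < Sh E /\ 0 < Ih E /\ 0 < Sv E /\ 0 < Iv E.

Definition R0 (R : rcfType) (betah muh muv Cvh Chv : R) : R :=
  Num.sqrt (Cvh * Chv * betah / (muh ^+ 2 * muv)).

From mathcomp Require Import all_boot all_order all_algebra.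
From mathcomp Require Import lra ring.
Import Order.TTheory GRing.Theory Num.Theory.
Local Open Scope ring_scope.

(* Adding the two vector equations shows that at any equilibrium the vector
   population is [N_v = betav / muv]; the host equations then express [S_h] and
   [I_h] through the vector prevalence [q = I_v / N_v], so an endemic equilibrium
   is [endemic_state q] for some [0 < q < 1].  The last vector equation, divided
   by [q > 0], is linear in [q]; its root [q_star] is always below 1 and is
   positive exactly when [Cvh * Chv * betah > muh ^+ 2 * muv], i.e. [R0 > 1].
   Equilibria are constant solutions. *)

Lemma is_equilibriumP (R : fieldType) (betah betav muh muv Cvh Chv : R)
    (E : state R) :
  is_equilibrium betah betav muh muv Cvh Chv E <->
  [/\ betah = Cvh * (Iv E / Nv E) * Sh E + muh * Sh E,
      Cvh * (Iv E / Nv E) * Sh E = muh * Ih E,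
      betav = Chv * Ih E * Sv E + muv * Sv E &
      Chv * Ih E * Sv E = muv * Iv E].
Proof.
rewrite /is_equilibrium /vfield -!addrA -!opprD.
split=> [[] | [-> -> -> ->]]; last by rewrite !subrr.
by do 4![move=> /eqP; rewrite subr_eq0 => /eqP ?].
Qed.

Section EndemicEquilibrium.
Variables (R : realFieldType) (betah betav muh muv Cvh Chv : R).
Hypotheses (hbh : 0 < betah) (hbv : 0 < betav) (hmh : 0 < muh) (hmv : 0 < muv)
  (hCvh : 0 < Cvh) (hChv : 0 < Chv).

Definition Nv_star := betav / muv.

Definition endemic_state (q : R) : state R :=
  (betah / (muh + Cvh * q), Cvh * q * betah / (muh * (muh + Cvh * q)),
   Nv_star * (1 - q), Nv_star * q).

Definition q_star :=
  (Cvh * Chv * betah - muh ^+ 2 * muv) / (Cvh * Chv * betah + muh * muv * Cvh).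

Let den_gt0 : 0 < Cvh * Chv * betah + muh * muv * Cvh.
Proof. by rewrite addr_gt0 // !mulr_gt0. Qed.

Let den_neq0 : Cvh * Chv * betah + muh * muv * Cvh != 0.
Proof. by rewrite gt_eqF. Qed.

Lemma q_star_lt1 : q_star < 1.
Proof.
rewrite /q_star ltr_pdivrMr // mul1r ltrBlDr -addrA ltrDl.
by rewrite addr_gt0 // !mulr_gt0 // exprn_gt0.
Qed.

Lemma q_star_gt0 : (0 < q_star) = (muh ^+ 2 * muv < Cvh * Chv * betah).
Proof. by rewrite /q_star pmulr_lgt0 ?invr_gt0 // subr_gt0. Qed.

Lemma Nv_star_gt0 : 0 < Nv_star.
Proof. exact: divr_gt0. Qed.

Lemma endemic_state_balance q : 0 < q ->
  (Chv * Ih (endemic_state q) * (1 - q) == muv * q) = (q == q_star).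
Proof.
move=> q_gt0; have m_gt0 : 0 < muh + Cvh * q by rewrite addr_gt0 // mulr_gt0.
have qd_nz : q / (muh * (muh + Cvh * q)) != 0.
  by rewrite gt_eqF // divr_gt0 // mulr_gt0.
have -> : Chv * Ih (endemic_state q) * (1 - q) =
          q / (muh * (muh + Cvh * q)) * (Chv * Cvh * betah * (1 - q)).
  by rewrite /Ih /=; ring.
have -> : muv * q = q / (muh * (muh + Cvh * q)) * (muv * (muh * (muh + Cvh * q))).
  by field; rewrite !gt_eqF.
rewrite (can_eq (mulKf qd_nz)) /q_star.
rewrite -(can2_eq (mulfK den_neq0) (divfK den_neq0)).
by apply/eqP/eqP => ?; lra.
Qed.

Lemma endemic_state_equilibrium :
  is_endemic_equilibrium betah betav muh muv Cvh Chv (endemic_state q_star) <->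
  0 < q_star.
Proof.
split=> [[_ [_ [_ [_]]]] | q_gt0].
  by rewrite /Iv /= pmulr_rgt0 ?Nv_star_gt0.
have q_lt1 := q_star_lt1.
have m_gt0 : 0 < muh + Cvh * q_star by rewrite addr_gt0 // mulr_gt0.
have Nv_gt0 := Nv_star_gt0.
set E := endemic_state q_star.
have Sh_eq : Sh E * (muh + Cvh * q_star) = betah by rewrite divfK ?gt_eqF.
have Ih_eq : Cvh * q_star * Sh E = muh * Ih E.
  by rewrite /Ih /Sh /=; field; rewrite !gt_eqF.
have Nv_eq : Nv E = Nv_star by rewrite /Nv /Sv /Iv /=; ring.
have prevalence : Iv E / Nv E = q_star.
  by rewrite Nv_eq /Iv /= mulrC mulKf ?gt_eqF.
have infection : Chv * Ih E * Sv E = muv * Iv E.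
  have /eqP balance : Chv * Ih E * (1 - q_star) == muv * q_star.
    by rewrite endemic_state_balance.
  by rewrite /Sv /Iv /= mulrCA balance mulrCA.
split.
  apply/is_equilibriumP; rewrite prevalence; split=> //.
  - by rewrite -Sh_eq; ring.
  - by rewrite infection -mulrDr addrC -/(Nv E) Nv_eq mulrC divfK ?gt_eqF.
rewrite /Sh /Ih /Sv /Iv /=; do !split.
- exact: divr_gt0.
- by apply: divr_gt0; apply: mulr_gt0 => //; apply: mulr_gt0.
- by rewrite mulr_gt0 ?subr_gt0.
- exact: mulr_gt0.
Qed.

Lemma endemic_equilibriumE E :
  is_endemic_equilibrium betah betav muh muv Cvh Chv E ->
  E = endemic_state (Iv E / Nv E).
Proof.
case: E => [[[sh ih] sv] iv] [/is_equilibriumP[]].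
rewrite /Nv /Sh /Ih /Sv /Iv /= => inflow_h infection_h inflow_v infection_v.
case=> _ [_ [sv_gt0 iv_gt0]].
set q := iv / (sv + iv) in inflow_h infection_h *.
have q_gt0 : 0 < q by rewrite divr_gt0 ?addr_gt0.
have m_neq0 : muh + Cvh * q != 0 by rewrite gt_eqF // addr_gt0 // mulr_gt0.
have Nv_eq : sv + iv = Nv_star.
  by rewrite /Nv_star inflow_v infection_v -mulrDr addrC mulrC mulKf ?gt_eqF.
have Nv_neq0 : sv + iv != 0 by rewrite gt_eqF ?addr_gt0.
rewrite /endemic_state -Nv_eq; congr (_, _, _, _).
- by rewrite inflow_h; field.
- transitivity (Cvh * q * sh / muh).
    by rewrite infection_h; field; rewrite gt_eqF.
  by rewrite inflow_h; field; rewrite m_neq0 gt_eqF.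
- by rewrite /q; field.
- by rewrite /q; field.
Qed.

Lemma endemic_equilibrium_prevalence E :
  is_endemic_equilibrium betah betav muh muv Cvh Chv E -> Iv E / Nv E = q_star.
Proof.
move=> endE.
have [/is_equilibriumP[_ _ _ infection_v] [_ [_ [Sv_gt0 Iv_gt0]]]] := endE.
have Nv_neq0 : Nv E != 0 by rewrite gt_eqF ?addr_gt0.
have Iv_eq : Nv E * (Iv E / Nv E) = Iv E by rewrite mulrC divfK.
have Sv_eq : Nv E * (1 - Iv E / Nv E) = Sv E by rewrite mulrBr mulr1 Iv_eq addrK.
apply/eqP; rewrite -endemic_state_balance ?divr_gt0 ?addr_gt0 //.
rewrite -(endemic_equilibriumE _ endE); apply/eqP/(mulfI Nv_neq0).
by rewrite mulrCA Sv_eq [RHS]mulrCA Iv_eq.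
Qed.

Lemma endemic_equilibrium_state E :
  is_endemic_equilibrium betah betav muh muv Cvh Chv E ->
  E = endemic_state q_star.
Proof.
move=> endE.
rewrite {1}(endemic_equilibriumE _ endE).
by rewrite (endemic_equilibrium_prevalence _ endE).
Qed.

Lemma exists_unique_endemic_equilibrium :
  (exists! E, is_endemic_equilibrium betah betav muh muv Cvh Chv E) <->
  0 < q_star.
Proof.
split=> [[E [endE _]] | q_gt0].
  by rewrite -endemic_state_equilibrium -(endemic_equilibrium_state _ endE).
exists (endemic_state q_star); split; first exact/endemic_state_equilibrium.
by move=> E /endemic_equilibrium_state ->.
Qed.

End EndemicEquilibrium.

Lemma R0_gt1 (R : rcfType) (betah muh muv Cvh Chv : R) :
  0 < betah -> 0 < muh -> 0 < muv -> 0 < Cvh -> 0 < Chv ->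
  (1 < R0 betah muh muv Cvh Chv) = (muh ^+ 2 * muv < Cvh * Chv * betah).
Proof.
move=> hbh hmh hmv hCvh hChv; have den_gt0 : 0 < muh ^+ 2 * muv.
  by rewrite mulr_gt0 ?exprn_gt0.
by rewrite /R0 -{1}sqrtr1 ltr_sqrt ?divr_gt0 ?mulr_gt0 // ltr_pdivlMr // mul1r.
Qed.

Theorem lemma1 (R : rcfType) (betah betav muh muv Cvh Chv tau : R)
  (hbh : 0 < betah) (hbv : 0 < betav) (hmh : 0 < muh) (hmv : 0 < muv)
  (hCvh : 0 < Cvh) (hChv : 0 < Chv) (htau : 0 <= tau) :
  (exists! E : state R, is_endemic_equilibrium betah betav muh muv Cvh Chv E)
  <-> 1 < R0 betah muh muv Cvh Chv.
Proof.
by rewrite R0_gt1 // -q_star_gt0 //; apply: exists_unique_endemic_equilibrium.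
Qed.
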